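(* Let $\lambda$ be a partition with $|\lambda| = k$. Then for all $n \in \mathbb{N}$ (with $\mathbb{N}=\{0,1,2,\dots\}$), \[ \frac{1}{\# \mathcal{OT}(\lambda,k+2n)\cdot(2n+k+1)} \sum_{T \in \mathcal{OT}(\lambda,k+2n)} \mathrm{wt}(T) = \frac{n}{3} + \frac{k}{2}.\]
   Context: Young's lattice is the poset of all integer partitions ordered by inclusion of Young diagrams; write $\mu \lessdot \lambda$ if the Young diagram of $\lambda$ is obtained from that of $\mu$ by adding one box. $|\lambda|$ denotes the size (number of boxes) of $\lambda$. A walk in Young's lattice is a sequence of partitions $(\lambda^{0},\lambda^{1},\ldots,\lambda^{l})$ such that for each $1\le i\le l$ either $\lambda^{i-1}\lessdot\lambda^{i}$ or $\lambda^{i}\lessdot\lambda^{i-1}$. An oscillating tableau of shape $\lambda$ and length $l$ is such a walk with $\lambda^{0}=\emptyset$ (the empty partition) and $\lambda^{l}=\lambda$; $\mathcal{OT}(\lambda,l)$ denotes the set of all of them. The weight of $T=(\lambda^{0},\ldots,\lambda^{l})$ is $\mathrm{wt}(T) := \sum_{i=0}^{l}|\lambda^{i}|$. *)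

From HB Require Import structures.
From mathcomp Require Import all_boot all_order all_algebra.
Set Implicit Arguments. Unset Strict Implicit. Unset Printing Implicit Defensive.

Definition is_part (l : seq nat) : bool :=
  sorted geq l && all (fun x => 0 < x) l.

Definition psize (l : seq nat) : nat := sumn l.

Definition cover (mu lam : seq nat) : bool :=
  [&& is_part mu, is_part lam &
      has (fun i => incr_nth mu i == lam) (iota 0 (size mu).+1)].

Definition ystep (mu lam : seq nat) : bool := cover mu lam || cover lam mu.

Definition is_OT (lam : seq nat) (l : nat) (T : seq (seq nat)) : bool :=
  match T with
  | [::] => false
  | x :: s => [&& x == [::], size s == l, path ystep x s & last x s == lam]
  end.

Definition wt (T : seq (seq nat)) : nat := sumn (map psize T).

From mathcomp Require Import all_boot all_order all_algebra.
From mathcomp Require Import zify ring lra.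
Set Implicit Arguments. Unset Strict Implicit. Unset Printing Implicit Defensive.

(* Write f^mu for the number of standard Young tableaux of shape mu.  A
   partition has exactly one more addable than removable box, which makes
   Young's lattice a differential poset (DU - UD = Id); hence summing f over the
   partitions covering mu gives (|mu| + 1) f^mu, and summing it over those
   covered by a nonempty mu gives f^mu.  By induction on l, the number of walks
   of length l from the empty partition to mu and their total weight are then
   A(l, |mu|) f^mu and B(l, |mu|) f^mu, where the coefficients satisfy
   B(l, h) = (l + 1)(l + 2h)/6 A(l, h).  For l = k + 2n and h = k the average
   weight is thus (2n + k + 1)(3k + 2n)/6. *)

Local Notation nth0 := (nth 0%N).

Lemma part_nth_gt0 s j : is_part s -> (0 < nth0 s j) = (j < size s).
Proof.
case/andP=> _ /allP s_gt0; have [lt_js|le_sj] := ltnP j (size s).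
  exact/s_gt0/mem_nth.
by rewrite nth_default.
Qed.

Lemma eq_part a b : is_part a -> is_part b ->
  (forall j, nth0 a j = nth0 b j) -> a = b.
Proof.
move=> pa pb eq_ab; apply: (eq_from_nth (x0 := 0)) => [|i _]; last exact: eq_ab.
have size_ab j : (j < size a) = (j < size b).
  by rewrite -(part_nth_gt0 j pa) -(part_nth_gt0 j pb) eq_ab.
by apply/eqP; rewrite eqn_leq leqNgt size_ab ltnn leqNgt -size_ab ltnn.
Qed.

Lemma part_nth_geS s j : is_part s -> nth0 s j.+1 <= nth0 s j.
Proof.
case/andP=> /(sortedP 0) s_sorted _; have [lt_js|le_sj] := ltnP j.+1 (size s).
  exact: s_sorted.
by rewrite nth_default.
Qed.

Lemma is_part_nth s : (forall j, j < size s -> 0 < nth0 s j) ->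
  (forall j, nth0 s j.+1 <= nth0 s j) -> is_part s.
Proof.
move=> s_gt0 s_dec; apply/andP; split; first by apply/(sortedP 0) => i _; apply: s_dec.
by apply/(all_nthP 0) => i /s_gt0.
Qed.

Lemma sumn_incr_nth s i : sumn (incr_nth s i) = (sumn s).+1.
Proof.
elim: s i => [|x s IHs] [|i] //=; last by rewrite IHs addnS.
by elim: i => //= i ->.
Qed.

Definition addable (mu : seq nat) i := (i == 0) || (nth0 mu i < nth0 mu i.-1).
Definition removable (mu : seq nat) i := nth0 mu i.+1 < nth0 mu i.

Lemma addable_size mu i : addable mu i -> i <= size mu.
Proof.
case: i => // i; rewrite /addable /= => lt_nth; rewrite leqNgt.
by apply: contraL lt_nth => lt_mu_i; rewrite !nth_default // ltnW.
Qed.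

Lemma is_part_incr_nth mu i : is_part mu -> addable mu i ->
  is_part (incr_nth mu i).
Proof.
move=> pm add_i; apply: is_part_nth => j; rewrite !nth_incr_nth.
  rewrite size_incr_nth addn_gt0 (part_nth_gt0 _ pm).
  case: ifP => [_ ->|_]; first by rewrite orbT.
  rewrite ltnS leq_eqVlt => /predU1P[->|lt_ji]; first by rewrite eqxx.
  by rewrite (leq_trans lt_ji (addable_size add_i)) orbT.
have := part_nth_geS j pm; move: add_i; rewrite /addable.
by case: (i =P j.+1) => [->|]; case: (i =P j) => //=; lia.
Qed.

Lemma cover_incr_nth mu i : is_part mu -> addable mu i ->
  cover mu (incr_nth mu i).
Proof.
move=> pm add_i; apply/and3P; split; rewrite ?is_part_incr_nth //.
by apply/hasP; exists i; rewrite ?mem_iota ?ltnS ?addable_size.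
Qed.

Lemma addable_of_nth mu nu i : is_part nu ->
  (forall k, nth0 nu k = nth0 mu k + (k == i)) -> addable mu i.
Proof.
case: i => // i pn nuE; have := part_nth_geS i pn.
by rewrite /addable /= !nuE eqxx (ltn_eqF (ltnSn i)); lia.
Qed.

Lemma coverP mu nu : cover mu nu <->
  [/\ is_part mu, is_part nu & exists i, forall k, nth0 nu k = nth0 mu k + (k == i)].
Proof.
split=> [|[pm pn [i nuE]]].
  case/and3P=> pm pn /hasP[i _ /eqP nuE]; subst nu.
  by split=> //; exists i => k; rewrite nth_incr_nth addnC eq_sym.
have add_i := addable_of_nth pn nuE.
have <- : incr_nth mu i = nu.
  apply: eq_part => [||k]; rewrite ?is_part_incr_nth //.
  by rewrite nth_incr_nth nuE addnC eq_sym.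
exact: cover_incr_nth.
Qed.

Lemma cover_incr_nthP mu nu : cover mu nu ->
  exists2 i, addable mu i & nu = incr_nth mu i.
Proof.
case/and3P=> pm pn /hasP[i _ /eqP nuE]; exists i => //.
by apply: addable_of_nth pn _ => k; rewrite -nuE nth_incr_nth addnC eq_sym.
Qed.

Lemma cover_is_partl mu nu : cover mu nu -> is_part mu.
Proof. by case/and3P. Qed.

Lemma cover_is_partr mu nu : cover mu nu -> is_part nu.
Proof. by case/and3P. Qed.

Lemma psize_cover mu nu : cover mu nu -> psize nu = (psize mu).+1.
Proof. by case/cover_incr_nthP=> i _ ->; rewrite /psize sumn_incr_nth. Qed.

Lemma removable_size mu i : removable mu i -> i < size mu.
Proof.
have [//|le_mu_i] := ltnP i (size mu).
by rewrite /removable !nth_default ?(leqW le_mu_i).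
Qed.

Definition remove_box (mu : seq nat) i :=
  [seq x <- mkseq (fun j => nth0 mu j - (j == i)) (size mu) | x != 0].

Lemma nth_filter_neq0_mkseq n (f : nat -> nat) :
  (forall j, f j.+1 <= f j) -> (forall j, n <= j -> f j = 0) ->
  forall j, nth0 [seq x <- mkseq f n | x != 0] j = f j.
Proof.
elim: n f => [|n IHn] f f_dec f_out j; first by rewrite nth_nil f_out.
have f_ge a b : a <= b -> f b <= f a.
  elim: b => [|b IHb]; first by rewrite leqn0 => /eqP ->.
  by rewrite leq_eqVlt => /predU1P[-> //|/IHb]; apply: leq_trans.
have -> : mkseq f n.+1 = f 0 :: mkseq (fun j => f j.+1) n.
  by rewrite /mkseq /= -[1]addn0 iotaDl -map_comp.
have [f00|f0_gt0] := posnP (f 0); last first.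
  rewrite /= -lt0n f0_gt0; case: j => //= j.
  by apply: IHn => [k|k le_nk]; [apply: f_dec|apply: f_out].
have f_eq0 b : f b = 0 by apply/eqP; rewrite -leqn0 -f00 f_ge.
rewrite /= f00 f_eq0; set s := filter _ _; suff -> : s = [::] by rewrite nth_nil.
apply/eqP; rewrite -[_ == _]negbK -has_filter.
by apply/hasPn => x /mapP[y _ ->]; rewrite f_eq0.
Qed.

Lemma nth_remove_box mu i j : is_part mu -> removable mu i ->
  nth0 (remove_box mu i) j = nth0 mu j - (j == i).
Proof.
move=> pm rem_i; apply: nth_filter_neq0_mkseq => [k|k le_mu_k].
  have := part_nth_geS k pm; move: rem_i; rewrite /removable.
  by case: (k =P i) => [->|]; case: (k.+1 =P i) => //=; lia.
by rewrite nth_default.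
Qed.

Lemma cover_remove_box mu i : is_part mu -> removable mu i ->
  cover (remove_box mu i) mu.
Proof.
move=> pm rem_i; apply/coverP; split=> //.
  apply: is_part_nth => [j /(mem_nth 0)|j].
    by rewrite mem_filter lt0n => /andP[].
  rewrite !nth_remove_box //; have := part_nth_geS j pm; move: rem_i.
  by rewrite /removable; case: (j =P i) => [->|]; case: (j.+1 =P i) => //=; lia.
exists i => k; rewrite nth_remove_box //; move: rem_i; rewrite /removable.
by case: (k =P i) => [->|] /=; lia.
Qed.

Definition ups mu := if is_part mu then
  [seq incr_nth mu i | i <- iota 0 (size mu).+1 & addable mu i] else [::].
Definition downs mu := if is_part mu then
  [seq remove_box mu i | i <- iota 0 (size mu) & removable mu i] else [::].

Lemma mem_ups mu nu : (nu \in ups mu) = cover mu nu.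
Proof.
rewrite /ups; case: ifP => pm.
  apply/mapP/idP => [[i]|/cover_incr_nthP[i add_i ->]].
    by rewrite mem_filter => /andP[add_i _] ->; apply: cover_incr_nth.
  by exists i; rewrite // mem_filter add_i mem_iota ltnS addable_size.
by rewrite in_nil; apply/esym/negbTE; apply: contraFN pm; apply: cover_is_partl.
Qed.

Lemma mem_downs mu rho : (rho \in downs mu) = cover rho mu.
Proof.
rewrite /downs; case: ifP => pm.
  apply/mapP/idP => [[i]|rho_mu].
    by rewrite mem_filter => /andP[rem_i _] ->; apply: cover_remove_box.
  have prho := cover_is_partl rho_mu.
  have [i _ muE] := cover_incr_nthP rho_mu.
  have rem_i : removable mu i.
    have := part_nth_geS i prho.
    by rewrite /removable muE !nth_incr_nth eqxx (ltn_eqF (ltnSn i)); lia.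
  exists i; first by rewrite mem_filter rem_i mem_iota removable_size.
  apply: eq_part => // [|k]; first exact: cover_is_partl (cover_remove_box pm rem_i).
  by rewrite nth_remove_box // muE nth_incr_nth; lia.
by rewrite in_nil; apply/esym/negbTE; apply: contraFN pm; apply: cover_is_partr.
Qed.

Lemma uniq_ups mu : uniq (ups mu).
Proof.
rewrite /ups; case: ifP => // _.
by rewrite map_inj_uniq ?filter_uniq ?iota_uniq //; apply: incr_nth_inj.
Qed.

Lemma uniq_downs mu : uniq (downs mu).
Proof.
rewrite /downs; case: ifP => // pm.
rewrite map_inj_in_uniq ?filter_uniq ?iota_uniq // => i i'.
rewrite !mem_filter => /andP[rem_i _] /andP[rem_i' _] E.
have := nth_remove_box i pm rem_i; rewrite E nth_remove_box // eqxx.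
have := removable_size rem_i; rewrite -(part_nth_gt0 _ pm).
by case: (i =P i') => // _; lia.
Qed.

(* Row [i.+1] of [mu] is addable exactly when row [i] is removable. *)
Lemma size_ups mu : is_part mu -> size (ups mu) = (size (downs mu)).+1.
Proof.
move=> pm; rewrite /ups /downs pm !size_map !size_filter.
rewrite -[(size mu).+1]add1n iotaD /= add0n -[1]addn0 iotaDl count_map add1n.
by congr S; apply: eq_count.
Qed.

Lemma cover_common_lower mu tau nu : tau != mu -> cover mu nu -> cover tau nu ->
  exists rho, cover rho mu /\ cover rho tau.
Proof.
move=> tau_mu /coverP[pm pn [i nuE]] /coverP[pt _ [j nuE']].
have muE k : nth0 mu k + (k == i) = nth0 tau k + (k == j) by rewrite -nuE -nuE'.
have /negPf j_i : j != i.
  apply: contra tau_mu => /eqP j_i; apply/eqP/eq_part => // k.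
  by have := muE k; rewrite j_i; lia.
have rem_j : removable mu j.
  by have := muE j; have := muE j.+1; have := part_nth_geS j pt; rewrite /removable; lia.
exists (remove_box mu j); split; first exact: cover_remove_box.
apply/coverP; split=> //; first exact: cover_is_partl (cover_remove_box pm rem_j).
by exists i => k; rewrite nth_remove_box //; have := muE k; lia.
Qed.

Lemma cover_common_upper mu tau rho : tau != mu -> cover rho mu -> cover rho tau ->
  exists nu, cover mu nu /\ cover tau nu.
Proof.
move=> tau_mu /coverP[pr pm [a muE]] /coverP[_ pt [b tauE]].
have a_b : a != b.
  apply: contra tau_mu => /eqP a_b; apply/eqP/eq_part => // k.
  by rewrite muE tauE a_b.
have add_b : addable mu b.
  rewrite /addable; case: b tauE a_b => //= b tauE a_b.
  have := muE b.+1; have := muE b; have := tauE b; have := tauE b.+1.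
  by have := part_nth_geS b pt; lia.
have mu_nu := cover_incr_nth pm add_b.
exists (incr_nth mu b); split=> //.
apply/coverP; split=> //; first exact: cover_is_partr mu_nu.
by exists a => k; rewrite nth_incr_nth muE tauE; lia.
Qed.

Lemma cover_common_upper_uniq mu tau nu1 nu2 : tau != mu ->
  cover mu nu1 -> cover tau nu1 -> cover mu nu2 -> cover tau nu2 -> nu1 = nu2.
Proof.
move=> tau_mu /coverP[pm p1 [i1 E1]] /coverP[pt _ [j1 F1]]
  /coverP[_ p2 [i2 E2]] /coverP[_ _ [j2 F2]].
have i1_j1 : i1 != j1.
  apply: contra tau_mu => /eqP i1_j1; apply/eqP/eq_part => // k.
  by have := E1 k; have := F1 k; rewrite i1_j1; lia.
have i1_i2 : i1 = i2 by have := E1 i1; have := F1 i1; have := E2 i1; have := F2 i1; lia.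
by apply: eq_part => // k; rewrite E1 E2 i1_i2.
Qed.

Lemma cover_common_lower_uniq mu tau rho1 rho2 : tau != mu ->
  cover rho1 mu -> cover rho1 tau -> cover rho2 mu -> cover rho2 tau -> rho1 = rho2.
Proof.
move=> tau_mu /coverP[p1 pm [a1 E1]] /coverP[_ pt [b1 F1]]
  /coverP[p2 _ [a2 E2]] /coverP[_ _ [b2 F2]].
have a1_b1 : a1 != b1.
  apply: contra tau_mu => /eqP a1_b1; apply/eqP/eq_part => // k.
  by rewrite E1 F1 a1_b1.
have a1_a2 : a1 = a2 by have := E1 a1; have := F1 a1; have := E2 a1; have := F2 a1; lia.
by apply: eq_part => // k; have := E1 k; have := E2 k; rewrite a1_a2; lia.
Qed.

Lemma count_uniq_has (T : eqType) (P : pred T) s : uniq s ->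
  {in s &, forall x y, P x -> P y -> x = y} -> count P s = has P s.
Proof.
elim: s => [|x s IHs] //= /andP[x_notin_s s_uniq] P_inj.
rewrite IHs //; last by move=> a b a_s b_s; apply: P_inj; rewrite inE ?a_s ?b_s orbT.
have [Px|] //= := boolP (P x); suff -> : has P s = false by [].
apply/negbTE/hasPn => y y_s; apply: contraNN x_notin_s => Py.
by rewrite (P_inj x y) ?inE ?eqxx ?y_s ?orbT.
Qed.

Definition up_downs mu := flatten (map downs (ups mu)).
Definition down_ups mu := flatten (map ups (downs mu)).

Lemma count_up_downs mu x :
  count_mem x (up_downs mu) = count (fun nu => x \in downs nu) (ups mu).
Proof.
rewrite count_flatten -map_comp -sumn_count; congr sumn; apply: eq_map => nu /=.
by rewrite count_uniq_mem ?uniq_downs.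
Qed.

Lemma count_down_ups mu x :
  count_mem x (down_ups mu) = count (fun rho => x \in ups rho) (downs mu).
Proof.
rewrite count_flatten -map_comp -sumn_count; congr sumn; apply: eq_map => rho /=.
by rewrite count_uniq_mem ?uniq_ups.
Qed.

(* Off the diagonal [D U = U D]; with [size_ups] this is the identity
   [D U - U D = 1] making Young's lattice a differential poset. *)
Lemma perm_up_downs_down_ups mu :
  perm_eq [seq t <- up_downs mu | t != mu] [seq t <- down_ups mu | t != mu].
Proof.
apply/allP => x _; apply/eqP.
have [->|x_mu] := eqVneq x mu.
  have no_mu s : count_mem mu [seq t <- s | t != mu] = 0.
    by apply/count_memPn; rewrite mem_filter eqxx.
  by rewrite !no_mu.
have drop_mu s : count_mem x [seq t <- s | t != mu] = count_mem x s.
  by rewrite count_filter; apply: eq_count => y /=; case: (y =P x) => // ->; rewrite x_mu.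
rewrite !drop_mu count_up_downs count_down_ups !count_uniq_has ?uniq_ups ?uniq_downs //.
- congr (nat_of_bool _); apply/hasP/hasP => [[nu]|[rho]]; rewrite mem_ups mem_downs.
    move=> mu_nu x_nu; have [rho []] := cover_common_lower x_mu mu_nu x_nu.
    by exists rho; rewrite ?mem_downs ?mem_ups.
  move=> rho_mu rho_x; have [nu []] := cover_common_upper x_mu rho_mu rho_x.
  by exists nu; rewrite ?mem_downs ?mem_ups.
- move=> r1 r2; rewrite !mem_downs !mem_ups => r1_mu r2_mu r1_x r2_x.
  exact: cover_common_lower_uniq x_mu r1_mu r1_x r2_mu r2_x.
- move=> r1 r2; rewrite !mem_downs !mem_ups => mu_r1 mu_r2 x_r1 x_r2.
  exact: cover_common_upper_uniq x_mu mu_r1 x_r1 mu_r2 x_r2.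
Qed.

Lemma sum_pred1_seq (T : eqType) (s : seq T) x (F : T -> nat) :
  \sum_(t <- s | t == x) F t = count_mem x s * F x.
Proof.
rewrite (eq_bigr (fun=> F x)) => [|t /eqP -> //].
by rewrite big_const_seq iter_addn_0 mulnC.
Qed.

Lemma count_mem_up_downs mu : count_mem mu (up_downs mu) = size (ups mu).
Proof.
rewrite count_up_downs -count_predT; apply: eq_in_count => nu.
by rewrite mem_ups mem_downs.
Qed.

Lemma count_mem_down_ups mu : count_mem mu (down_ups mu) = size (downs mu).
Proof.
rewrite count_down_ups -count_predT; apply: eq_in_count => rho.
by rewrite mem_ups mem_downs.
Qed.

Lemma sum_up_downs mu (F : seq nat -> nat) : is_part mu ->
  \sum_(t <- up_downs mu) F t = \sum_(t <- down_ups mu) F t + F mu.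
Proof.
move=> pm; rewrite (bigID (pred1 mu)) [X in _ = X + _](bigID (pred1 mu)) /=.
rewrite !sum_pred1_seq count_mem_up_downs count_mem_down_ups size_ups //.
rewrite -!(big_filter _ (fun t => t != mu)).
by rewrite (perm_big _ (perm_up_downs_down_ups mu)) mulSn -addnA addnC.
Qed.

(* [nsyt mu] is the number f^mu of standard Young tableaux of shape [mu],
   counted as saturated chains from [mu] down to the empty partition. *)
Fixpoint nsyt_rec (s : nat) (mu : seq nat) : nat :=
  if s is s'.+1 then \sum_(rho <- downs mu) nsyt_rec s' rho else 1.
Definition nsyt mu := nsyt_rec (psize mu) mu.

Lemma part_psize0 mu : is_part mu -> psize mu = 0 -> mu = [::].
Proof. by case: mu => // x s /andP[_ /= /andP[x_gt0 _]]; rewrite /psize /=; lia. Qed.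

Lemma sum_nsyt_downs mu : is_part mu ->
  \sum_(rho <- downs mu) nsyt rho = (0 < psize mu) * nsyt mu.
Proof.
move=> pm; case psize_mu: (psize mu) => [|s].
  by rewrite (part_psize0 pm psize_mu) big_nil.
rewrite mul1n /nsyt psize_mu /= !big_seq; apply: eq_bigr => rho.
by rewrite mem_downs => /psize_cover; rewrite psize_mu => -[->].
Qed.

Lemma sum_nsyt_ups mu : is_part mu ->
  \sum_(nu <- ups mu) nsyt nu = (psize mu).+1 * nsyt mu.
Proof.
have [n] := ubnP (psize mu); elim: n mu => // n IHn mu lt_mu_n pm.
have -> : \sum_(nu <- ups mu) nsyt nu = \sum_(t <- up_downs mu) nsyt t.
  rewrite big_flatten big_map !big_seq; apply: eq_bigr => nu /[!mem_ups] mu_nu.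
  by rewrite sum_nsyt_downs ?(cover_is_partr mu_nu) // (psize_cover mu_nu) mul1n.
have sum_down_ups : \sum_(t <- down_ups mu) nsyt t = psize mu * nsyt mu.
  rewrite big_flatten big_map big_seq.
  rewrite (eq_bigr (fun rho => psize mu * nsyt rho)) => [|rho /[!mem_downs] rho_mu].
    rewrite -big_seq -big_distrr sum_nsyt_downs //.
    by case: (psize mu) => //= k; rewrite mul1n.
  have lt_rho_n : psize rho < n by rewrite -ltnS -(psize_cover rho_mu).
  by rewrite IHn ?(cover_is_partl rho_mu) // (psize_cover rho_mu).
by rewrite sum_up_downs // sum_down_ups mulSn addnC.
Qed.

Lemma nsyt_gt0 mu : is_part mu -> 0 < nsyt mu.
Proof.
have [n] := ubnP (psize mu); elim: n mu => // n IHn mu lt_mu_n pm.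
have [mu0|mu_gt0] := posnP (psize mu); first by rewrite /nsyt mu0.
have size_gt0 : 0 < size mu by case: mu pm mu_gt0 {lt_mu_n}.
have rem_last : removable mu (size mu).-1.
  by rewrite /removable prednK // nth_default // part_nth_gt0 // ltn_predL.
have last_mu := cover_remove_box pm rem_last.
have last_downs : remove_box mu (size mu).-1 \in downs mu by rewrite mem_downs.
have := sum_nsyt_downs pm; rewrite mu_gt0 mul1n => <-.
rewrite (bigD1_seq _ last_downs (uniq_downs mu)) /= addn_gt0 IHn //.
  by rewrite -ltnS -(psize_cover last_mu).
exact: cover_is_partl last_mu.
Qed.

Definition nbrs mu := downs mu ++ ups mu.

Lemma mem_nbrs mu nu : (nu \in nbrs mu) = ystep mu nu.
Proof. by rewrite mem_cat mem_downs mem_ups orbC. Qed.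

Lemma nbrs_sym mu nu : (nu \in nbrs mu) = (mu \in nbrs nu).
Proof. by rewrite !mem_nbrs /ystep orbC. Qed.

Lemma uniq_nbrs mu : uniq (nbrs mu).
Proof.
rewrite cat_uniq uniq_downs uniq_ups andbT /=; apply/hasPn => nu.
rewrite mem_ups mem_downs => /psize_cover nuE; apply/negP => /psize_cover; lia.
Qed.

Fixpoint walks l : seq (seq (seq nat)) :=
  if l is l'.+1 then [seq rcons T nu | T <- walks l', nu <- nbrs (last [::] T)]
  else [:: [:: [::]]].

Definition is_walk l (T : seq (seq nat)) :=
  if T is x :: s then [&& x == [::], size s == l & path ystep x s] else false.

Lemma mem_walks l T : (T \in walks l) = is_walk l T.
Proof.
elim: l T => [|l IHl] T.
  by rewrite inE; case: T => [|x [|y s]] //=; rewrite ?andbF.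
apply/allpairsPdep/idP => [[T' [nu [T'_walk nu_T' ->]]]|].
  move: T'_walk nu_T'; rewrite IHl; case: T' => // x s /and3P[x0 size_s x_s] nu_s /=.
  by rewrite x0 size_rcons eqSS size_s rcons_path x_s -mem_nbrs.
case: T => // x s /and3P[x0 size_s x_s]; case/lastP: s size_s x_s => // s nu.
rewrite size_rcons eqSS rcons_path => size_s /andP[x_s s_nu].
by exists (x :: s), nu; rewrite IHl /= x0 size_s x_s mem_nbrs.
Qed.

Lemma uniq_walks l : uniq (walks l).
Proof.
elim: l => //= l IHl; apply: allpairs_uniq_dep => // [T _|[T nu] [T' nu'] _ _].
  exact: uniq_nbrs.
by case/rcons_inj=> -> ->.
Qed.

Lemma sum_walks_last l mu (F : seq (seq nat) -> nat) :
  \sum_(T <- walks l.+1 | last [::] T == mu) F T =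
  \sum_(rho <- nbrs mu) \sum_(T <- walks l | last [::] T == rho) F (rcons T mu).
Proof.
symmetry; under eq_bigr => rho _ do rewrite big_mkcond; symmetry.
rewrite exchange_big /= big_flatten big_map; apply: eq_bigr => T _.
rewrite big_map -big_mkcond /= (eq_bigl (pred1 mu)) => [|nu]; last by rewrite last_rcons.
rewrite sum_pred1_seq count_uniq_mem ?uniq_nbrs // nbrs_sym.
rewrite (eq_bigl (pred1 (last [::] T))) => [|rho]; last by rewrite /= eq_sym.
by rewrite (@sum_pred1_seq _ _ _ (fun=> F (rcons T mu))) count_uniq_mem ?uniq_nbrs.
Qed.

Definition nwalks l mu := \sum_(T <- walks l | last [::] T == mu) 1.
Definition wwalks l mu := \sum_(T <- walks l | last [::] T == mu) wt T.

Lemma nwalksS l mu : nwalks l.+1 mu = \sum_(rho <- nbrs mu) nwalks l rho.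
Proof. exact: sum_walks_last. Qed.

Lemma wwalksS l mu :
  wwalks l.+1 mu = \sum_(rho <- nbrs mu) wwalks l rho + psize mu * nwalks l.+1 mu.
Proof.
rewrite /wwalks sum_walks_last nwalksS big_distrr -big_split; apply: eq_bigr => rho _.
rewrite /nwalks big_distrr -big_split; apply: eq_bigr => T _ /=.
by rewrite /wt map_rcons sumn_rcons muln1.
Qed.

Import Order.TTheory GRing.Theory Num.Theory.
Local Open Scope ring_scope.

(* [nwalks l mu = walk_coef l |mu| * f^mu] and
   [wwalks l mu = weight_coef l |mu| * f^mu]: the recursions below are those of
   [nwalksS] and [wwalksS] after summing f over [downs] and [ups]. *)
Fixpoint walk_coef (l h : nat) : rat :=
  if l is l'.+1 then
    (if h is h'.+1 then walk_coef l' h' else 0) + h.+1%:R * walk_coef l' h.+1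
  else (h == 0)%:R.

Fixpoint weight_coef (l h : nat) : rat :=
  if l is l'.+1 then
    (if h is h'.+1 then weight_coef l' h' else 0) + h.+1%:R * weight_coef l' h.+1
      + h%:R * walk_coef l h
  else 0.

Lemma walk_coef_shift l h :
  (l%:R - h%:R) * walk_coef l h = (h.+1%:R * h.+2%:R) * walk_coef l h.+2.
Proof.
elim: l h => [|l IHl] [|h]; rewrite /= ?mulr0 ?mul0r ?subrr //.
  apply/eqP; rewrite -subr_eq0; apply/eqP.
  transitivity ((l%:R - 1%:R) * walk_coef l 1 - (2%:R * 3%:R) * walk_coef l 3).
    by rewrite add0r; ring.
  by rewrite IHl subrr.
apply/eqP; rewrite -subr_eq0; apply/eqP.
transitivity (((l%:R - h%:R) * walk_coef l h - (h.+1%:R * h.+2%:R) * walk_coef l h.+2)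
  + h.+2%:R * ((l%:R - h.+2%:R) * walk_coef l h.+2
               - (h.+3%:R * h.+4%:R) * walk_coef l h.+4)); first by ring.
by rewrite !IHl !subrr mulr0 addr0.
Qed.

Lemma weight_coefE l h :
  weight_coef l h = (l.+1%:R * (l%:R + 2%:R * h%:R)) / 6%:R * walk_coef l h.
Proof.
elim: l h => [|l IHl] [|h]; rewrite /= ?mulr0 ?mul0r //; first by rewrite IHl; ring.
apply/eqP; rewrite -subr_eq0; apply/eqP; rewrite !IHl.
transitivity (- (2%:R / 3%:R) * ((l%:R - h%:R) * walk_coef l h
                               - (h.+1%:R * h.+2%:R) * walk_coef l h.+2)); first by field.
by rewrite walk_coef_shift subrr mulr0.
Qed.

Lemma walk_coef_ge0 l h : 0 <= walk_coef l h.
Proof.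
elim: l h => [|l IHl] h /=; first by case: (h == 0%N).
by apply: addr_ge0; [case: h|apply: mulr_ge0].
Qed.

Lemma walk_coef_gt0 l h : (h <= l)%N -> ~~ odd (l + h) -> 0 < walk_coef l h.
Proof.
elim: l h => [|l IHl] [|h] //= le_hl odd_lh.
  rewrite add0r mulr_gt0 // IHl //; first by case: l {IHl} le_hl odd_lh.
  by move: odd_lh; rewrite addn1 addn0.
have coef_gt0 : 0 < walk_coef l h.
  by apply: IHl => //; move: odd_lh; rewrite addnS /= negbK.
by apply: lt_le_trans coef_gt0 _; rewrite lerDl mulr_ge0 ?walk_coef_ge0.
Qed.

Section SumNeighbours.

Variables (X : seq nat -> nat) (C : nat -> rat).
Hypothesis XE : forall rho, is_part rho -> (X rho)%:R = C (psize rho) * (nsyt rho)%:R.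

Lemma sum_downs_scaled_nsyt mu : is_part mu ->
  (\sum_(rho <- downs mu) X rho)%:R
  = C (psize mu).-1 * ((0 < psize mu)%N * nsyt mu)%:R.
Proof.
move=> pm; rewrite -sum_nsyt_downs // !natr_sum mulr_sumr !big_seq.
apply: eq_bigr => rho /[!mem_downs] rho_mu.
by rewrite XE ?(cover_is_partl rho_mu) // (psize_cover rho_mu).
Qed.

Lemma sum_ups_scaled_nsyt mu : is_part mu ->
  (\sum_(nu <- ups mu) X nu)%:R = C (psize mu).+1 * ((psize mu).+1 * nsyt mu)%:R.
Proof.
move=> pm; rewrite -sum_nsyt_ups // !natr_sum mulr_sumr !big_seq.
apply: eq_bigr => nu /[!mem_ups] mu_nu.
by rewrite XE ?(cover_is_partr mu_nu) // (psize_cover mu_nu).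
Qed.

End SumNeighbours.

Lemma nwalks_wwalks_nsyt l mu : is_part mu ->
  (nwalks l mu)%:R = walk_coef l (psize mu) * (nsyt mu)%:R /\
  (wwalks l mu)%:R = weight_coef l (psize mu) * (nsyt mu)%:R.
Proof.
elim: l mu => [|l IHl] mu pm.
  rewrite /nwalks /wwalks /= !big_cons !big_nil /=.
  have [<-|mu_nil] := eqVneq [::] mu; first by rewrite /nsyt /= mul1r.
  have /negPf -> : psize mu != 0%N.
    by apply: contra mu_nil => /eqP/(part_psize0 pm) ->.
  by rewrite !mul0r.
have nwalksE rho : is_part rho ->
    (nwalks l rho)%:R = walk_coef l (psize rho) * (nsyt rho)%:R.
  by case/IHl.
have wwalksE rho : is_part rho ->
    (wwalks l rho)%:R = weight_coef l (psize rho) * (nsyt rho)%:R.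
  by case/IHl.
have nwalksSE : (nwalks l.+1 mu)%:R = walk_coef l.+1 (psize mu) * (nsyt mu)%:R.
  rewrite nwalksS big_cat natrD (sum_downs_scaled_nsyt nwalksE pm).
  rewrite (sum_ups_scaled_nsyt nwalksE pm).
  by case: (psize mu) => [|h] /=; rewrite !natrM; ring.
split=> //; rewrite wwalksS natrD big_cat natrD.
rewrite (sum_downs_scaled_nsyt wwalksE pm) (sum_ups_scaled_nsyt wwalksE pm).
rewrite [(psize mu * _)%:R]natrM nwalksSE.
by case: (psize mu) => [|h] /=; rewrite !natrM; ring.
Qed.

Theorem corollary3 (lam : seq nat) (k n : nat)
  (Hlam : is_part lam) (Hk : psize lam = k)
  (ts : seq (seq (seq nat))) (Huniq : uniq ts)
  (Hts : forall T, (T \in ts) = is_OT lam (k + 2 * n) T) :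
  (\sum_(T <- ts) (wt T)%:R : rat) / ((size ts)%:R * (2 * n + k + 1)%:R)
  = n%:R / 3 + k%:R / 2.
Proof.
set l := (k + 2 * n)%N.
have ts_walks : perm_eq ts [seq T <- walks l | last [::] T == lam].
  apply: uniq_perm; rewrite ?filter_uniq ?uniq_walks // => T.
  rewrite Hts mem_filter mem_walks; case: T => [|x s] /=; first by rewrite andbF.
  by apply/and4P/and4P => -[? ? ? ?].
rewrite (perm_big _ ts_walks) big_filter (perm_size ts_walks) size_filter.
rewrite -sum1_count -natr_sum -/(nwalks l lam) -/(wwalks l lam).
have [-> ->] := nwalks_wwalks_nsyt l Hlam; rewrite weight_coefE Hk.
have nsyt_neq0 : (nsyt lam)%:R != 0 :> rat by rewrite pnatr_eq0 -lt0n nsyt_gt0.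
have coef_neq0 : walk_coef l k != 0.
  apply: lt0r_neq0; apply: walk_coef_gt0; first by rewrite /l leq_addr.
  have -> : (l + k = (k + n).*2)%N by rewrite /l -addnn; lia.
  by rewrite odd_double.
rewrite /l natrD natrM; field.
by rewrite coef_neq0 nsyt_neq0 -natrM -natrD natr1 pnatr_eq0.
Qed.
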